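(* Let $R''\subseteq R\subseteq S_n$ be the top-$k$ partial rankings $R: a_1\succ\cdots\succ a_l\succ[n]\setminus\{a_1,\dots,a_l\}$ and $R'': a_1\succ\cdots\succ a_l\succ a_{l+1}\succ\cdots\succ a_m\succ[n]\setminus\{a_1,\dots,a_m\}$ with $l\le m$. Then for every $\sigma\in R$, $$d(\sigma,\Pi_{R''}(\sigma))=\big((n-l)-(m-l)\big)(m-l)+\binom{m-l}2-d\big(A_R(\sigma),\Pi_{R''}(A_R(\sigma))\big).$$
   Context: $S_n$ is the symmetric group on $[n]$; $\sigma\in S_n$ is identified with the full ranking $\sigma(1)\succ\cdots\succ\sigma(n)$. For distinct items $x,y$, $\{x,y\}$ is discordant for $\sigma,\tau$ if $(\sigma^{-1}(x)-\sigma^{-1}(y))(\tau^{-1}(x)-\tau^{-1}(y))<0$. The Kendall distance $d(\sigma,\tau)$ is the number of unordered discordant pairs. For $0\le k\le n$ and distinct $c_1,\dots,c_k\in[n]$, the top-$k$ partial ranking $Q$: $c_1\succ\cdots\succ c_k\succ[n]\setminus\{c_1,\dots,c_k\}$ is the set $\{\sigma\in S_n:\sigma(i)=c_i,\ i\le k\}$; its antithetic operator $A_Q:Q\to Q$ is $A_Q(\sigma)(i)=c_i$ for $i\le k$ and $A_Q(\sigma)(k+j)=\sigma(n+1-j)$ for $j=1,\dots,n-k$. For $\tau\in S_n$, $\Pi_Q(\tau)$ denotes the unique element of $Q$ minimising $\rho\mapsto d(\rho,\tau)$ over $\rho\in Q$. *)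

(* Rankings are permutations of 'I_n: sigma maps a
   position (0-indexed) to the item placed at that position. *)
From HB Require Import structures.
From mathcomp Require Import all_boot all_order all_algebra all_fingroup.
From Stdlib Require Import Lia.
Set Implicit Arguments. Unset Strict Implicit. Unset Printing Implicit Defensive.

Definition discordant n (s t : 'S_n) (x y : 'I_n) : bool :=
  ((s^-1)%g x < (s^-1)%g y)%N != ((t^-1)%g x < (t^-1)%g y)%N.

Definition kendall n (s t : 'S_n) : nat :=
  #|[set p : 'I_n * 'I_n | (p.1 < p.2)%N && discordant s t p.1 p.2]|.

(* top-k partial ranking c_1 > ... > c_k > rest, with c = [:: c_1; ...; c_k] *)
Definition topk n (c : seq 'I_n) : {set 'S_n} :=
  [set s : 'S_n | [forall i : 'I_n, (i < size c)%N ==> (s i == nth i c i)]].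

(* position map for the antithetic operator (0-indexed):
   p < k is fixed, p >= k maps to n-1+k-p (reversal of the tail) *)
Definition anti_pos n (k : nat) (p : 'I_n) : 'I_n :=
  if (p < k)%N then p else insubd p (n.-1 + k - p)%N.

Lemma anti_pos_val n k (p : 'I_n) : k <= n ->
  val (anti_pos k p) = if (p < k)%N then val p else (n.-1 + k - p)%N.
Proof.
move=> kn; rewrite /anti_pos; case: ltnP => //= pk.
rewrite val_insubd; case: ifP => // /negbT; rewrite -leqNgt.
have pn := ltn_ord p; move: pk pn kn.
move=> /leP + /ltP + /leP + /leP; rewrite -?minusE -?plusE; lia.
Qed.

Lemma anti_pos_inj n k : k <= n -> injective (@anti_pos n k).
Proof.
move=> kn p q /(congr1 val); rewrite !anti_pos_val // => E; apply/val_inj.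
have pn := ltn_ord p; have qn := ltn_ord q.
move: E; case: (ltnP p k) => pk; case: (ltnP q k) => qk /= E.
all: move: pk qk pn qn kn E => /leP + /leP + /ltP + /ltP + /leP +; rewrite -?minusE -?plusE; lia.
Qed.

Definition anti_perm n (k : nat) : 'S_n :=
  if (k <= n)%N =P true is ReflectT h then perm (anti_pos_inj h) else 1%g.

(* antithetic operator A_Q for Q = topk c: A_Q(sigma)(p) = sigma(anti_pos p),
   which on Q equals c_p for p < k and sigma(n+1-j) at position k+j (1-indexed) *)
Definition antithetic n (c : seq 'I_n) (s : 'S_n) : 'S_n :=
  (anti_perm n (size c) * s)%g.

Definition proj n (c : seq 'I_n) (t : 'S_n) : 'S_n :=
  [arg min_(r < 1%g in topk c) kendall r t].

From HB Require Import structures.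
From mathcomp Require Import all_boot all_order all_algebra all_fingroup.
From mathcomp Require Import zify.
Set Implicit Arguments. Unset Strict Implicit. Unset Printing Implicit Defensive.

(* The projection of t onto the top-k ranking a is found pair by pair: a pair
   of items meeting a must be ordered as in a, and every other pair can be
   ordered as in t, so d(t, Pi(t)) counts the pairs meeting a on which t
   disagrees with a.  For s in the coarser R = topk (take l a), s and A_R(s)
   agree with a on pairs meeting take l a, while A_R reverses s on the items
   outside take l a.  Hence each pair meeting a but not take l a is counted
   exactly once in d(s, Pi(s)) + d(A_R(s), Pi(A_R(s))), and with m = size a
   there are C(n-l, 2) - C(n-m, 2) = (n-m)(m-l) + C(m-l, 2) such pairs. *)

Definition pos n (t : 'S_n) (x : 'I_n) : nat := (t^-1)%g x.

Lemma discordantE n (s t : 'S_n) x y :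
  discordant s t x y = ((pos s x < pos s y) != (pos t x < pos t y)).
Proof. by []. Qed.

Lemma kendallC n (s t : 'S_n) : kendall s t = kendall t s.
Proof. by apply: eq_card => p; rewrite !inE !discordantE eq_sym. Qed.

Lemma uniq_size_leq n (a : seq 'I_n) : uniq a -> size a <= n.
Proof. by move/card_uniqP=> <-; have := max_card (mem a); rewrite card_ord. Qed.

Lemma ltn_agree_meeting (T : Type) (P : pred T) (f g : T -> nat) l x y :
  (forall z, P z -> f z = g z /\ g z < l) ->
  (forall z, ~~ P z -> l <= f z /\ l <= g z) ->
  P x || P y -> (f x < f y) = (g x < g y).
Proof.
move=> onP offP; case: (boolP (P x)) => Px; case: (boolP (P y)) => Py //= _.
- by case: (onP x Px) => -> _; case: (onP y Py) => -> _.
- by case: (onP x Px) => -> ?; case: (offP y Py) => ??; apply/idP/idP; lia.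
- by case: (onP y Py) => -> ?; case: (offP x Px) => ??; apply/idP/idP; lia.
Qed.

Lemma index_take_ltE (T : eqType) (a : seq T) l x y :
  (x \in take l a) || (y \in take l a) ->
  (index x (take l a) < index y (take l a)) = (index x a < index y a).
Proof.
rewrite -{5 6}(cat_take_drop l a) !index_cat.
set c := take l a.
apply: (@ltn_agree_meeting _ (fun z => z \in c) (index^~ c)
  (fun z => if z \in c then index z c else size c + index z (drop l a)) (size c))
  => z /= zc; rewrite ?(negbTE zc).
  by rewrite zc index_mem.
by rewrite memNindex // leq_addr.
Qed.

Section KeyRanking.
Variables (n : nat) (f : 'I_n -> nat).
Hypothesis f_inj : injective f.

Definition key_rank x := #|[set y | f y < f x]|.

Lemma key_rank_lt x : key_rank x < n.
Proof.
rewrite -[X in _ < X]card_ord -cardsT; apply: proper_card; apply/properP.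
by split; [exact: subsetT | exists x; rewrite !inE ?ltnn].
Qed.

Lemma key_rank_ltE x y : (key_rank x < key_rank y) = (f x < f y).
Proof.
have mono u v : f u < f v -> key_rank u < key_rank v.
  move=> lt; apply: proper_card; apply/properP; split.
    by apply/subsetP => z; rewrite !inE => /ltn_trans; apply.
  by exists u; rewrite !inE ?ltnn.
case: (ltngtP (f x) (f y)) => [/mono // | /mono lt | /f_inj ->]; last by rewrite ltnn.
by apply/negbTE; rewrite -leqNgt ltnW.
Qed.

Lemma key_rank_ord_inj : injective (fun x => Ordinal (key_rank_lt x)).
Proof.
move=> x y /(congr1 val) /= E; apply: f_inj.
by case: (ltngtP (f x) (f y)) => //; rewrite -key_rank_ltE E ltnn.
Qed.

Definition key_ranking : 'S_n := (perm key_rank_ord_inj)^-1.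

Lemma pos_key_ranking x : pos key_ranking x = key_rank x.
Proof. by rewrite /pos invgK permE. Qed.

End KeyRanking.

Section TopK.
Variables (n : nat) (a : seq 'I_n).
Hypothesis a_uniq : uniq a.

Lemma pos_topk_mem r x : r \in topk a -> x \in a -> pos r x = index x a.
Proof.
rewrite inE => /forallP ra xa.
have xn : index x a < n by rewrite (leq_trans _ (uniq_size_leq a_uniq)) ?index_mem.
have /implyP := ra (Ordinal xn); rewrite /= index_mem xa nth_index // => /(_ isT) /eqP rx.
by rewrite /pos -{1}rx permK.
Qed.

Lemma pos_topk_notin r x : r \in topk a -> x \notin a -> size a <= pos r x.
Proof.
rewrite inE => /forallP ra; apply: contraR; rewrite -ltnNge => lt.
have /implyP := ra ((r^-1)%g x); rewrite lt permKV => /(_ isT) /eqP ->.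
by rewrite mem_nth.
Qed.

Lemma pos_topk_ltE r x y : r \in topk a -> (x \in a) || (y \in a) ->
  (pos r x < pos r y) = (index x a < index y a).
Proof.
move=> ra.
apply: (@ltn_agree_meeting _ (fun z => z \in a) (pos r) (index^~ a) (size a)) => z /= za.
  by rewrite (pos_topk_mem ra za) index_mem.
by rewrite memNindex // pos_topk_notin.
Qed.

Definition discord_index (t : 'S_n) (p : 'I_n * 'I_n) :=
  (index p.1 a < index p.2 a) != (pos t p.1 < pos t p.2).

Definition dist_topk (t : 'S_n) :=
  #|[set p : 'I_n * 'I_n |
      [&& p.1 < p.2, (p.1 \in a) || (p.2 \in a) & discord_index t p]]|.

Lemma dist_topk_leq_kendall r t : r \in topk a -> dist_topk t <= kendall r t.
Proof.
move=> ra; apply/subset_leq_card/subsetP => p; rewrite !inE discordantE.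
by case/and3P=> -> meet; rewrite (pos_topk_ltE ra meet).
Qed.

(* The minimiser of [kendall _ t] on [topk a]: a first, then the other
   items in t's order. *)
Definition topk_key (t : 'S_n) x := if x \in a then index x a else size a + pos t x.

Lemma topk_key_inj t : injective (topk_key t).
Proof.
move=> x y; rewrite /topk_key.
case: (boolP (x \in a)) => xa; case: (boolP (y \in a)) => ya.
- by apply: index_inj.
- by move=> E; move: xa; rewrite -index_mem E ltnNge leq_addr.
- by move=> E; move: ya; rewrite -index_mem -E ltnNge leq_addr.
- by move/addnI/val_inj/perm_inj.
Qed.

Definition topk_ranking (t : 'S_n) := key_ranking (@topk_key_inj t).

Lemma topk_ranking_topk t : topk_ranking t \in topk a.
Proof.
rewrite inE; apply/forallP => i; apply/implyP => ia; apply/eqP.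
set z := nth i a i.
have za : z \in a by rewrite mem_nth.
have rank_z : key_rank (topk_key t) z = i.
  rewrite /key_rank /topk_key za index_uniq //.
  rewrite -[RHS](size_takel (ltnW ia)) -(card_uniqP (take_uniq i a_uniq)).
  apply: eq_card => y; rewrite !inE; case: ifPn => ya; first by rewrite in_take.
  rewrite (contraNF (@mem_take _ _ _ _) ya); apply/negbTE.
  by rewrite -leqNgt (leq_trans (ltnW ia)) ?leq_addr.
have <- : (topk_ranking t)^-1%g z = i.
  by apply/val_inj; rewrite -[LHS]/(pos (topk_ranking t) z) pos_key_ranking.
by rewrite permKV.
Qed.

Lemma kendall_topk_ranking t : kendall (topk_ranking t) t = dist_topk t.
Proof.
apply: eq_card => p; rewrite !inE discordantE.
case: (boolP ((p.1 \in a) || (p.2 \in a))) => meet.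
  by rewrite (pos_topk_ltE (topk_ranking_topk t) meet).
rewrite !pos_key_ranking (key_rank_ltE (@topk_key_inj t)).
move: meet; rewrite negb_or /topk_key => /andP [/negbTE -> /negbTE ->].
by rewrite ltn_add2l eqxx !andbF.
Qed.

Lemma kendall_proj t : kendall t (proj a t) = dist_topk t.
Proof.
rewrite kendallC /proj /arg_min /extremum.
case: pickP => [r /andP [ra /forallP rmin] | none].
  apply/eqP; rewrite eqn_leq dist_topk_leq_kendall // andbT.
  by have := rmin (topk_ranking t); rewrite topk_ranking_topk kendall_topk_ranking.
have := none (topk_ranking t); rewrite /= topk_ranking_topk /=.
move/negbT/negP; case; apply/forallP => r; apply/implyP => ra.
by rewrite kendall_topk_ranking dist_topk_leq_kendall.
Qed.

End TopK.

Lemma anti_permE n k (p : 'I_n) : k <= n -> anti_perm n k p = anti_pos k p.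
Proof. by move=> kn; rewrite /anti_perm; case: eqP => // kn'; rewrite permE. Qed.

Lemma anti_posK n k : k <= n -> involutive (@anti_pos n k).
Proof.
move=> kn p; apply: val_inj => /=.
have posE (q : 'I_n) :
    nat_of_ord (anti_pos k q) = if q < k then nat_of_ord q else n.-1 + k - q.
  exact: (anti_pos_val q kn).
rewrite !posE; have := ltn_ord p; case: (ltnP p k) => pk pn; first by rewrite pk.
by case: ifP => lt; lia.
Qed.

Section Antithetic.
Variables (n : nat) (c : seq 'I_n) (s : 'S_n).
Hypothesis c_le : size c <= n.

Lemma pos_antithetic x :
  pos (antithetic c s) x =
  if pos s x < size c then pos s x else n.-1 + size c - pos s x.
Proof.
rewrite /pos -(anti_pos_val ((s^-1)%g x) c_le); congr val.
apply: (@perm_inj _ (antithetic c s)); rewrite permKV /antithetic permM.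
by rewrite anti_permE // anti_posK // permKV.
Qed.

Lemma antithetic_topk : s \in topk c -> antithetic c s \in topk c.
Proof.
rewrite !inE => /forallP sc; apply/forallP => i; apply/implyP => ic.
rewrite /antithetic permM anti_permE // /anti_pos ic.
by have /implyP := sc i; apply.
Qed.

Lemma pos_antithetic_ltE x y : s \in topk c -> x \notin c -> y \notin c ->
  (pos (antithetic c s) x < pos (antithetic c s) y) = (pos s y < pos s x).
Proof.
move=> sc xc yc; rewrite !pos_antithetic.
have := pos_topk_notin sc xc; have := pos_topk_notin sc yc.
have := ltn_ord ((s^-1)%g x); have := ltn_ord ((s^-1)%g y).
rewrite -/(pos s x) -/(pos s y) => ys xs cy cx.
rewrite !(ltnNge _ (size c)) cx cy /=; apply/idP/idP; lia.
Qed.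

End Antithetic.

Definition pairs n (X : {set 'I_n}) :=
  [set p : 'I_n * 'I_n | [&& p.1 < p.2, p.1 \in X & p.2 \in X]].

Lemma pairsS n (X Y : {set 'I_n}) : X \subset Y -> pairs X \subset pairs Y.
Proof.
move/subsetP=> XY; apply/subsetP => p; rewrite !inE.
by case/and3P=> -> /XY -> /XY ->.
Qed.

(* X \times X splits into the pairs below, above and on the diagonal *)
Lemma card_pairs_double n (X : {set 'I_n}) : 2 * #|pairs X| + #|X| = #|X| * #|X|.
Proof.
rewrite -cardsX.
set L := [set p : 'I_n * 'I_n | p.1 < p.2].
set G := [set p : 'I_n * 'I_n | p.2 < p.1].
rewrite -(cardsID L (setX X X)) -(cardsID G (setX X X :\: L)).
have below : #|setX X X :&: L| = #|pairs X|.
  by apply: eq_card => p; rewrite !inE andbC andbA.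
have above : #|(setX X X :\: L) :&: G| = #|pairs X|.
  have swap_inj : injective (fun p : 'I_n * 'I_n => (p.2, p.1)).
    by move=> [??] [??] [-> ->].
  rewrite -(card_imset _ swap_inj); apply: eq_card => p; rewrite !inE.
  apply/idP/imsetP => [/andP [/andP [_ /andP [p1X p2X]] p21] | [q]].
    by exists (p.2, p.1); [rewrite !inE p21 p1X p2X | case: p {p1X p2X p21}].
  rewrite !inE => /and3P [q12 q1 q2] -> /=.
  by rewrite q1 q2 q12 -leqNgt ltnW.
have diag : #|(setX X X :\: L) :\: G| = #|X|.
  rewrite -(card_imset _ (f := fun x : 'I_n => (x, x))); last by move=> x y [].
  apply: eq_card => p; rewrite !inE; apply/idP/imsetP.
    case: p => x y /=; rewrite -!leqNgt => /and4P [xy yx xX _].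
    by exists x => //; congr pair; apply/val_inj/eqP; rewrite eqn_leq yx.
  by case=> x xX ->; rewrite /= ltnn xX.
rewrite below above diag; lia.
Qed.

Lemma card_pairs n (X : {set 'I_n}) : #|pairs X| = 'C(#|X|, 2).
Proof.
have bin2_double d : 2 * 'C(d, 2) + d = d * d.
  by elim: d => // d IH; rewrite binS bin1; nia.
by have := card_pairs_double X; have := bin2_double #|X|; nia.
Qed.

Lemma bin2D p q : 'C(p + q, 2) = 'C(p, 2) + p * q + 'C(q, 2).
Proof.
elim: q => [|q IH]; first by rewrite (@bin_small 0) // muln0 !addn0.
by rewrite addnS !binS !bin1 IH; lia.
Qed.

Lemma card_notin n (c : seq 'I_n) : uniq c -> #|[set z | z \notin c]| = n - size c.
Proof.
move=> c_uniq; rewrite cardsCs card_ord -(card_uniqP c_uniq).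
by congr (_ - _); apply: eq_card => z; rewrite !inE negbK.
Qed.

Section TopkRefinement.
Variables (n : nat) (a : seq 'I_n) (l : nat).
Hypotheses (a_uniq : uniq a) (l_le : l <= size a).
Let c := take l a.

Lemma discord_index_take t p : t \in topk c ->
  (p.1 \in c) || (p.2 \in c) -> discord_index a t p = false.
Proof.
move=> tc meet; apply/negbTE; rewrite negbK /discord_index.
by rewrite -(index_take_ltE (l := l)) // (pos_topk_ltE (take_uniq l a_uniq) tc meet).
Qed.

Definition strip := pairs [set z | z \notin c] :\: pairs [set z | z \notin a].

Lemma dist_topk_strip t : t \in topk c ->
  dist_topk a t = #|[set p in strip | discord_index a t p]|.
Proof.
move=> tc; apply: eq_card => p; rewrite !inE.
case: (boolP ((p.1 \in c) || (p.2 \in c))) => meet.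
  by rewrite discord_index_take // !andbF.
move: meet; rewrite negb_or => /andP [-> ->].
by case: (p.1 < p.2); case: (p.1 \in a); case: (p.2 \in a).
Qed.

Lemma dist_topk_antithetic s : s \in topk c ->
  dist_topk a s + dist_topk a (antithetic c s) = #|strip|.
Proof.
move=> sc; have c_le : size c <= n by rewrite uniq_size_leq ?take_uniq.
have flip (p : 'I_n * 'I_n) : p.1 < p.2 -> p.1 \notin c -> p.2 \notin c ->
    discord_index a (antithetic c s) p = ~~ discord_index a s p.
  move=> lt12 p1c p2c.
  have ne : pos s p.1 != pos s p.2.
    by apply: contraTneq lt12 => /val_inj /perm_inj ->; rewrite ltnn.
  rewrite /discord_index pos_antithetic_ltE //.
  rewrite (ltnNge (pos s p.2)) (leq_eqVlt (pos s p.1)) (negbTE ne) /=.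
  by case: (index _ a < _); case: (pos s _ < _).
rewrite !dist_topk_strip ?antithetic_topk //.
rewrite -(cardsID [set p | discord_index a s p] strip); congr (_ + _).
  by apply: eq_card => p; rewrite !inE.
apply: eq_card => p; rewrite !inE.
case: (boolP (p.1 < p.2)) => lt12; rewrite ?andbF //=.
case: (boolP (p.1 \in c)) => p1c; rewrite ?andbF //=.
case: (boolP (p.2 \in c)) => p2c; rewrite ?andbF //=.
by rewrite flip // andbC.
Qed.

Lemma card_strip : #|strip| = (n - size a) * (size a - l) + 'C(size a - l, 2).
Proof.
have a_le := uniq_size_leq a_uniq.
have notin_sub : [set z | z \notin a] \subset [set z | z \notin c].
  by apply/subsetP => z; rewrite !inE; apply: contra; apply: mem_take.
rewrite /strip cardsD (setIidPr (pairsS notin_sub)) !card_pairs.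
rewrite !card_notin ?take_uniq // size_takel //.
have -> : n - l = (n - size a) + (size a - l) by lia.
by rewrite bin2D -addnA addKn.
Qed.

End TopkRefinement.

Local Open Scope ring_scope.

Theorem lemma8 (n : nat) (a : seq 'I_n) (l : nat) (s : 'S_n) :
  uniq a -> (l <= size a)%N -> s \in topk (take l a) ->
  (kendall s (proj a s))%:Z =
    ((n%:Z - l%:Z) - ((size a)%:Z - l%:Z)) * ((size a)%:Z - l%:Z)
    + ('C(size a - l, 2))%:Z
    - (kendall (antithetic (take l a) s) (proj a (antithetic (take l a) s)))%:Z.
Proof.
move=> a_uniq l_le s_top.
have a_le := uniq_size_leq a_uniq.
have sum_eq := dist_topk_antithetic a_uniq s_top.
rewrite card_strip // -!kendall_proj // in sum_eq.
have prodE : ((n - size a) * (size a - l))%N%:Z =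
    (n%:Z - l%:Z - ((size a)%:Z - l%:Z)) * ((size a)%:Z - l%:Z).
  by rewrite PoszM -!subzn //; congr (_ * _); lia.
lia.
Qed.
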